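(* Let a preference profile with $n$ men and $n$ women be given. If some stable matching of this profile contains a hell-couple consisting of man $A$ and woman $Z$, then every stable matching of this profile matches $A$ with $Z$.
   Context: Each of $n$ men strictly ranks the $n$ women by a bijection to $\{1,\dots,n\}$ (1 = favorite, $n$ = least favorite), and each woman strictly ranks the $n$ men likewise. A matching is a perfect pairing of men with women. A matching is stable if there is no man $M$ and woman $W$, not matched to each other, such that each prefers the other to their assigned partner. A hell-pair is a man and a woman who rank each other $n$ (last); a hell-couple in a matching is a hell-pair who are matched to each other. *)

From mathcomp Require Import all_boot all_order all_fingroup.
Set Implicit Arguments. Unset Strict Implicit. Unset Printing Implicit Defensive.

(* A preference profile: each man m has a bijection (permutation) from women
   to 'I_n; his rank of woman w is  val (mpref m w) + 1  in {1..n}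
   (1 = favorite, n = least favorite). *)
Record profile (n : nat) := Profile {
  mpref : 'I_n -> {perm 'I_n};
  wpref : 'I_n -> {perm 'I_n}
}.

Definition mrank n (P : profile n) (m w : 'I_n) : nat := (val (mpref P m w)).+1.
Definition wrank n (P : profile n) (w m : 'I_n) : nat := (val (wpref P w m)).+1.

(* A matching is a perfect pairing: a bijection from men to women,
   mu m = the woman matched with man m. *)
Definition matching n := {perm 'I_n}.

Definition stable n (P : profile n) (mu : matching n) : Prop :=
  ~ exists (m w : 'I_n),
      [/\ mu m != w,
          mrank P m w < mrank P m (mu m)
        & wrank P w m < wrank P w ((mu^-1)%g w)].

Definition hell_pair n (P : profile n) (m w : 'I_n) : Prop :=
  mrank P m w = n /\ wrank P w m = n.

Definition hell_couple n (P : profile n) (mu : matching n) (m w : 'I_n) : Prop :=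
  hell_pair P m w /\ mu m = w.

From mathcomp Require Import all_boot all_order all_fingroup.
Set Implicit Arguments. Unset Strict Implicit. Unset Printing Implicit Defensive.

(* A man who prefers his nu-partner
   w to his mu-partner is preferred by w to her mu-partner (otherwise they
   block mu); a woman who prefers her mu-partner m to her nu-partner is
   preferred by m to his mu-partner (otherwise they block nu).  Counting, mu
   maps the men preferring nu exactly onto the women preferring mu.  If (A, Z)
   is a hell-couple of mu and nu A != Z, then A prefers nu, so Z = mu A would
   prefer mu to nu, i.e. prefer A, her last choice, to someone else. *)

Section Ranks.

Variables (n : nat) (P : profile n).

Lemma mrank_inj m : injective (mrank P m).
Proof. by move=> w1 w2 [] /val_inj /perm_inj. Qed.

Lemma wrank_inj w : injective (wrank P w).
Proof. by move=> m1 m2 [] /val_inj /perm_inj. Qed.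

Lemma mrank_le m w : mrank P m w <= n.
Proof. exact: ltn_ord. Qed.

Lemma wrank_le w m : wrank P w m <= n.
Proof. exact: ltn_ord. Qed.

Lemma mrank_lt_last m w w' : mrank P m w = n -> w' != w -> mrank P m w' < n.
Proof.
move=> last_w neq_w'w; rewrite ltn_neqAle mrank_le andbT.
by apply: contra neq_w'w => /eqP; rewrite -{2}last_w => /mrank_inj ->.
Qed.

End Ranks.

Section Stability.

Variables (n : nat) (P : profile n) (mu : matching n).
Hypothesis stable_mu : stable P mu.

Lemma stable_wrank_lt m w :
  mrank P m w < mrank P m (mu m) -> wrank P w ((mu^-1)%g w) < wrank P w m.
Proof.
move=> m_prefers_w.
have neq_mu_m_w : mu m != w by apply: contraTneq m_prefers_w => ->; rewrite ltnn.
have neq_partner_m : (mu^-1)%g w != m.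
  by apply: contra neq_mu_m_w => /eqP <-; rewrite permKV.
rewrite ltn_neqAle; apply/andP; split.
  by apply: contra neq_partner_m => /eqP /wrank_inj ->.
by rewrite leqNgt; apply/negP => w_prefers_m; apply: stable_mu; exists m, w.
Qed.

Lemma stable_mrank_lt w m :
  wrank P w m < wrank P w ((mu^-1)%g w) -> mrank P m (mu m) < mrank P m w.
Proof.
move=> w_prefers_m.
have neq_partner_m : (mu^-1)%g w != m.
  by apply: contraTneq w_prefers_m => ->; rewrite ltnn.
have neq_mu_m_w : mu m != w.
  by apply: contra neq_partner_m => /eqP <-; rewrite permK.
rewrite ltn_neqAle; apply/andP; split.
  by apply: contra neq_mu_m_w => /eqP /mrank_inj ->.
by rewrite leqNgt; apply/negP => m_prefers_w; apply: stable_mu; exists m, w.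
Qed.

End Stability.

Definition better_men n (P : profile n) (mu nu : matching n) : {set 'I_n} :=
  [set m | mrank P m (nu m) < mrank P m (mu m)].

Definition better_women n (P : profile n) (mu nu : matching n) : {set 'I_n} :=
  [set w | wrank P w ((nu^-1)%g w) < wrank P w ((mu^-1)%g w)].

Section TwoStableMatchings.

Variables (n : nat) (P : profile n) (mu nu : matching n).
Hypotheses (stable_mu : stable P mu) (stable_nu : stable P nu).

Lemma better_men_image m :
  m \in better_men P mu nu -> nu m \in better_women P nu mu.
Proof. by rewrite !inE permK; apply: stable_wrank_lt. Qed.

Lemma better_women_preimage w :
  w \in better_women P nu mu -> (mu^-1)%g w \in better_men P mu nu.
Proof. by rewrite !inE permKV; apply: stable_mrank_lt. Qed.

Lemma imset_better_men : mu @: better_men P mu nu = better_women P nu mu.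
Proof.
have sub_women : better_women P nu mu \subset mu @: better_men P mu nu.
  apply/subsetP => w /better_women_preimage better_w.
  by apply/imsetP; exists ((mu^-1)%g w); rewrite ?permKV.
have sub_nu : nu @: better_men P mu nu \subset better_women P nu mu.
  by apply/subsetP => _ /imsetP [m better_m ->]; apply: better_men_image.
apply/eqP; rewrite eq_sym eqEcard sub_women (card_imset _ (@perm_inj _ mu)).
by rewrite -(card_imset _ (@perm_inj _ nu)) subset_leq_card.
Qed.

End TwoStableMatchings.

Theorem mainTheorem7 (n : nat) (P : profile n) (A Z : 'I_n) :
  (exists mu : matching n, stable P mu /\ hell_couple P mu A Z) ->
  forall nu : matching n, stable P nu -> nu A = Z.
Proof.
move=> [mu [stable_mu [[last_A last_Z] mu_A]]] nu stable_nu.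
apply/eqP; apply/negPn/negP => nu_A_neq_Z.
have A_better : A \in better_men P mu nu.
  by rewrite inE mu_A last_A (mrank_lt_last last_A).
have : Z \in better_women P nu mu.
  by rewrite -(imset_better_men stable_mu stable_nu) -mu_A imset_f.
rewrite inE -mu_A permK mu_A last_Z.
by rewrite ltnNge wrank_le.
Qed.
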